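(* If $(a,b)\in R_0$, then $J(a,b)\ge 1/5$.
   Context: For $(a,b)\in\mathbb R^2$ define $f_{a,b}(x_1,x_2)=[b+a(x_1+x_2)+x_1x_2](2-x_1-x_2)$. Let $X_1=\{(x_1,x_2):-1\le x_1\le 0,\ -x_1\le x_2\le 1\}$ and $X_2=\{(x_1,x_2):-1\le x_1\le0,\ x_1\le x_2\le -x_1\}$. Let $\chi_{a,b}=\max_{X_1\cup X_2}f_{a,b}$, $m_{a,b}=\min_{X_1\cup X_2}f_{a,b}$, $R=\{(a,b)\in\mathbb R^2: m_{a,b}>0\}$, and for $(a,b)\in R$ let $J(a,b)=\frac{\chi_{a,b}-m_{a,b}}{\chi_{a,b}+m_{a,b}}$. Let $R_0=\{(a,b)\in R: b\le 2a\}$. *)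

From Stdlib Require Import Reals Lra.
Open Scope R_scope.

Definition fab (a b x1 x2 : R) : R :=
  (b + a * (x1 + x2) + x1 * x2) * (2 - x1 - x2).

Definition X1 (x1 x2 : R) : Prop := -1 <= x1 <= 0 /\ - x1 <= x2 <= 1.
Definition X2 (x1 x2 : R) : Prop := -1 <= x1 <= 0 /\ x1 <= x2 <= - x1.
Definition X12 (x1 x2 : R) : Prop := X1 x1 x2 \/ X2 x1 x2.

Definition IsMaxX12 (g : R -> R -> R) (M : R) : Prop :=
  (exists x1 x2, X12 x1 x2 /\ g x1 x2 = M) /\
  (forall x1 x2, X12 x1 x2 -> g x1 x2 <= M).

Definition IsMinX12 (g : R -> R -> R) (m : R) : Prop :=
  (exists x1 x2, X12 x1 x2 /\ g x1 x2 = m) /\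
  (forall x1 x2, X12 x1 x2 -> m <= g x1 x2).

Definition J (chi m : R) : R := (chi - m) / (chi + m).

From Stdlib Require Import Reals Lra.
Open Scope R_scope.

(* Three points of [X1 ∪ X2] suffice: [chi >= f(0,0) = 2b], [m <= f(-1,1) = 2(b-1)]
   and [m <= f(-1,-1) = 4(1+b-2a) <= 4] since [b <= 2a].  Hence
   [3m = 2m + m <= 2(2b-2) + 4 = 4b <= 2 chi], which is [J >= 1/5]. *)

Lemma X12_origin : X12 0 0.
Proof. right; unfold X2; lra. Qed.

Lemma X12_antidiagonal_corner : X12 (-1) 1.
Proof. left; unfold X1; lra. Qed.

Lemma X12_diagonal_corner : X12 (-1) (-1).
Proof. right; unfold X2; lra. Qed.

Lemma fab_origin (a b : R) : fab a b 0 0 = 2 * b.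
Proof. unfold fab; ring. Qed.

Lemma fab_antidiagonal_corner (a b : R) : fab a b (-1) 1 = 2 * (b - 1).
Proof. unfold fab; ring. Qed.

Lemma fab_diagonal_corner (a b : R) : fab a b (-1) (-1) = 4 * (1 + b - 2 * a).
Proof. unfold fab; ring. Qed.

Lemma three_min_le_two_max (a b chi m : R) :
  IsMaxX12 (fab a b) chi -> IsMinX12 (fab a b) m -> b <= 2 * a ->
  3 * m <= 2 * chi.
Proof.
  intros [_ chi_ub] [_ m_lb] b_le.
  pose proof (chi_ub _ _ X12_origin) as chi_ge.
  pose proof (m_lb _ _ X12_antidiagonal_corner) as m_le_anti.
  pose proof (m_lb _ _ X12_diagonal_corner) as m_le_diag.
  rewrite fab_origin in chi_ge.
  rewrite fab_antidiagonal_corner in m_le_anti.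
  rewrite fab_diagonal_corner in m_le_diag.
  lra.
Qed.

Lemma J_ge (c chi m : R) :
  0 < chi + m -> (1 + c) * m <= (1 - c) * chi -> c <= J chi m.
Proof.
  intros pos ratio; unfold J, Rdiv.
  apply Rmult_le_reg_r with (chi + m); [exact pos |].
  rewrite Rmult_assoc, Rinv_l by lra.
  lra.
Qed.

Theorem propositionA2 (a b chi m : R) :
  IsMaxX12 (fab a b) chi ->
  IsMinX12 (fab a b) m ->
  0 < m ->
  b <= 2 * a ->
  1 / 5 <= J chi m.
Proof.
  intros chi_max m_min m_pos b_le.
  pose proof (three_min_le_two_max a b chi m chi_max m_min b_le) as key.
  apply J_ge; lra.
Qed.
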